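(* Let $p>0$, $b\ge1$, and let $D(t)=\frac{(2b+1)^p}{2^p\Gamma(p)}\int_0^t s^{p-1}e^{-(b+\frac12)s}ds$, $t\ge0$. Let $f:\mathbb{R}\to\mathbb{R}$ be defined on $[0,1)$ as the inverse of the increasing bijection $[1,\infty)\ni t\mapsto D(\log t)\in[0,1)$, and $f=0$ outside $[0,1)$. Take $c=0$, $u(x)=x$ (so $\beta=1$). Then $\int_{\mathrm{supp}(f)}|f(s)|^{\beta+\frac{c-1}{2}}ds<\infty$, and there is $\gamma>0$ with $|m_{f,\pm}(x)|\ge\gamma(1+|x|)^{-p}$ for all $x\in\mathbb{R}$.
   Context: $m_{f,+}(x)=\int_{\mathrm{supp}(f)} u(f(s))|f(s)|^{(c-1)/2}e^{-ix\log|f(s)|}ds$, $m_{f,-}(x)=\int_{\mathrm{supp}(f)} u(f(s))|f(s)|^{(c-1)/2}e^{-ix\log|f(s)|}\,\mathrm{sgn}f(s)\,ds$, where $\mathrm{supp}(f)=\{f\ne0\}$. *)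

From Stdlib Require Import Reals Lra.
Open Scope R_scope.

Definition improper_int (g : R -> R) (a b L : R) : Prop :=
  a < b /\
  (forall u v, a < u -> u <= v -> v < b -> inhabited (Riemann_integrable g u v)) /\
  (forall eps, 0 < eps -> exists d, 0 < d /\
     forall u v (pr : Riemann_integrable g u v),
       a < u -> u < a + d -> b - d < v -> v < b -> u <= v ->
       Rabs (RiemannInt pr - L) < eps).

Definition improper_int_inf (g : R -> R) (a L : R) : Prop :=
  (forall u v, a < u -> u <= v -> inhabited (Riemann_integrable g u v)) /\
  (forall eps, 0 < eps -> exists d M, 0 < d /\
     forall u v (pr : Riemann_integrable g u v),
       a < u -> u < a + d -> M < v -> u <= v ->
       Rabs (RiemannInt pr - L) < eps).

Definition IsGamma (p G : R) : Prop :=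
  improper_int_inf (fun s => Rpower s (p - 1) * exp (- s)) 0 G.

Definition D_rel (p b G t y : R) : Prop :=
  (t = 0 /\ y = 0) \/
  (0 < t /\ exists L,
     improper_int (fun s => Rpower s (p - 1) * exp (- (b + / 2) * s)) 0 t L /\
     y = Rpower (2 * b + 1) p / (Rpower 2 p * G) * L).

Definition Rsgn (y : R) : R :=
  if Rlt_dec 0 y then 1 else if Rlt_dec y 0 then -1 else 0.

(* Real and imaginary parts of the integrand of m_{f,+} (sg = false)
   and m_{f,-} (sg = true):
   u(f s) |f s|^((c-1)/2) e^{-i x log|f s|} (sgn f s). *)
Definition m_integrand_re (u : R -> R) (c : R) (f : R -> R) (sg : bool)
  (x s : R) : R :=
  u (f s) * Rpower (Rabs (f s)) ((c - 1) / 2) * cos (x * ln (Rabs (f s)))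
  * (if sg then Rsgn (f s) else 1).

Definition m_integrand_im (u : R -> R) (c : R) (f : R -> R) (sg : bool)
  (x s : R) : R :=
  - (u (f s) * Rpower (Rabs (f s)) ((c - 1) / 2) * sin (x * ln (Rabs (f s)))
  * (if sg then Rsgn (f s) else 1)).

From Stdlib Require Import Reals Lra Classical.
From Coquelicot Require Import Coquelicot.
Open Scope R_scope.

(* On [[0, 1)], [log f] inverts [D], so the substitution [s = D(w^(1/p))] turns every
   integral into [(K/p) int_0^oo exp (- (b + 1/2) w^(1/p)) psi(w^(1/p)) dw], with [K] the
   normalising constant of [D]; the factor [|f|^(-1/2) = exp (- w^(1/p) / 2)] brings [b + 1/2]
   down to [b].  For [m_{f,+-}(x)] this gives [(K/p) I(x)], where
   [I(x) = int_0^oo exp (- (b - i x) w^(1/p)) dw = p Gamma(p) (b - i x)^(-p)].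
   Instead of complex powers we show that [|I(x)|^2 (b^2 + x^2)^p] does not depend on [x]:
   integration by parts bounds the [x]-derivative of the truncated quantity by
   [O(W exp (- b W^(1/p)))], which vanishes as [W -> +oo].  Hence
   [|I(x)| = I(0) (b^2 / (b^2 + x^2))^(p/2) >= I(0) (1 + |x|)^(-p)] because [b >= 1]. *)

Lemma Rpower_pos x y : 0 < Rpower x y.
Proof. exact (exp_pos _). Qed.

Lemma exp_le x y : x <= y -> exp x <= exp y.
Proof. intros [H|<-]; [left; apply exp_increasing, H|lra]. Qed.

Lemma Rabs_mul_le u v a c : Rabs u <= a -> Rabs v <= c -> Rabs (u * v) <= a * c.
Proof. intros; rewrite Rabs_mult; apply Rmult_le_compat; auto; apply Rabs_pos. Qed.

Lemma Rabs_mul_cos_le e t : 0 <= e -> Rabs (e * cos t) <= e.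
Proof.
  intros he; rewrite <- (Rmult_1_r e) at 2; apply Rabs_mul_le; [rewrite Rabs_pos_eq; lra|].
  apply Rabs_le, COS_bound.
Qed.

Lemma Rabs_mul_sin_le e t : 0 <= e -> Rabs (e * sin t) <= e.
Proof.
  intros he; rewrite <- (Rmult_1_r e) at 2; apply Rabs_mul_le; [rewrite Rabs_pos_eq; lra|].
  apply Rabs_le, SIN_bound.
Qed.

Lemma continuity_pt_eps (g : R -> R) x : continuity_pt g x ->
  forall eps, 0 < eps -> exists d, 0 < d /\ forall y, Rabs (y - x) < d -> Rabs (g y - g x) < eps.
Proof.
  intros Hg eps Heps; destruct (Hg eps Heps) as [d [Hd Hy]]; exists d; split; [exact Hd|].
  intros y Hyx; destruct (Req_dec y x) as [->|Hne].
  - rewrite Rminus_diag, Rabs_R0; exact Heps.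
  - apply Hy; split; [split; [exact I|congruence]|exact Hyx].
Qed.

(* Extended by [0] on [w <= 0], which keeps it continuous on all of [R]. *)
Definition Rroot (p w : R) : R := if Rlt_dec 0 w then Rpower w (/ p) else 0.

Section Roots.
Variable p : R.
Hypothesis hp : 0 < p.

Lemma Rroot_nonpos w : w <= 0 -> Rroot p w = 0.
Proof. intros Hw; unfold Rroot; destruct (Rlt_dec 0 w); [lra|reflexivity]. Qed.

Lemma Rroot_pos w : 0 < w -> Rroot p w = Rpower w (/ p).
Proof. intros Hw; unfold Rroot; destruct (Rlt_dec 0 w); [reflexivity|lra]. Qed.

Lemma Rroot_gt0 w : 0 < w -> 0 < Rroot p w.
Proof. intros Hw; rewrite Rroot_pos by exact Hw; apply Rpower_pos. Qed.

Lemma Rroot_ge0 w : 0 <= Rroot p w.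
Proof.
  destruct (Rlt_dec 0 w) as [Hw|Hw].
  - now left; apply Rroot_gt0.
  - rewrite Rroot_nonpos; lra.
Qed.

Lemma Rroot_Rpower t : 0 < t -> Rroot p (Rpower t p) = t.
Proof.
  intros ht; rewrite Rroot_pos, Rpower_mult by apply Rpower_pos.
  replace (p * / p) with 1 by (field; lra); exact (Rpower_1 _ ht).
Qed.

Lemma Rpower_Rroot w : 0 < w -> Rpower (Rroot p w) p = w.
Proof.
  intros hw; rewrite Rroot_pos, Rpower_mult by exact hw.
  replace (/ p * p) with 1 by (field; lra); exact (Rpower_1 _ hw).
Qed.

Lemma Rroot_lt v w : 0 < w -> v < w -> Rroot p v < Rroot p w.
Proof.
  intros hw hvw; destruct (Rlt_dec 0 v) as [hv|hv].
  - rewrite !Rroot_pos by lra.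
    apply Rlt_Rpower_l; [apply Rinv_0_lt_compat|split]; lra.
  - rewrite (Rroot_nonpos v) by lra; exact (Rroot_gt0 _ hw).
Qed.

Lemma Rroot_le v w : v <= w -> Rroot p v <= Rroot p w.
Proof.
  intros hvw; destruct (Rlt_dec 0 w) as [hw|hw].
  - destruct hvw as [hvw|<-]; [left; exact (Rroot_lt _ _ hw hvw)|lra].
  - rewrite !Rroot_nonpos; lra.
Qed.

Lemma Rroot_scal c w : 0 < c -> Rroot p (Rpower c p * w) = c * Rroot p w.
Proof.
  intros hc; destruct (Rlt_dec 0 w) as [hw|hw].
  - assert (0 < Rpower c p) by apply Rpower_pos.
    rewrite !Rroot_pos, <- Rpower_mult_distr, Rpower_mult by nra.
    replace (p * / p) with 1 by (field; lra); now rewrite Rpower_1.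
  - assert (0 < Rpower c p) by apply Rpower_pos.
    rewrite !Rroot_nonpos; nra.
Qed.

Lemma is_derive_Rroot w : 0 < w -> is_derive (Rroot p) w (Rroot p w / (p * w)).
Proof.
  intros hw; apply is_derive_ext_loc with (f := fun x => Rpower x (/ p)).
  - apply (locally_interval _ w 0 p_infty); [exact hw|exact I|].
    intros y hy _; symmetry; exact (Rroot_pos _ hy).
  - replace (Rroot p w / (p * w)) with (/ p * Rpower w (/ p - 1)).
    + apply is_derive_Reals, derivable_pt_lim_power, hw.
    + rewrite Rroot_pos by exact hw; unfold Rminus.
      rewrite Rpower_plus, Rpower_Ropp, Rpower_1 by exact hw; field; lra.
Qed.

Lemma continuity_pt_Rroot w : continuity_pt (Rroot p) w.
Proof.
  destruct (Rtotal_order w 0) as [Hw|[->|Hw]].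
  - apply (continuity_pt_locally_ext (fun _ => 0) _ (- w)); [lra| |].
    + intros y Hy; unfold Rdist in Hy; apply Rabs_def2 in Hy.
      symmetry; apply Rroot_nonpos; lra.
    + apply continuity_pt_const; intros ? ?; reflexivity.
  - intros eps Heps; exists (Rpower eps p); split; [apply Rpower_pos|].
    intros x [_ Hx]; simpl in *; unfold R_dist in *.
    rewrite (Rroot_nonpos 0), Rminus_0_r, Rabs_pos_eq by (lra || apply Rroot_ge0).
    rewrite Rminus_0_r in Hx; destruct (Rlt_dec 0 x) as [hx|hx].
    + rewrite Rabs_pos_eq in Hx by lra; rewrite <- (Rroot_Rpower eps) by exact Heps.
      apply Rroot_lt; [apply Rpower_pos|exact Hx].
    + rewrite Rroot_nonpos; lra.
  - apply derivable_continuous_pt; exists (Rroot p w / (p * w)).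
    apply is_derive_Reals, is_derive_Rroot, Hw.
Qed.

End Roots.

Ltac solve_continuity :=
  repeat match goal with
  | |- continuity_pt (fun _ => ?c) _ => apply continuity_pt_const; intros ? ?; reflexivity
  | |- continuity_pt (fun y => y) _ => apply continuity_pt_id
  | |- continuity_pt (fun y => @?f y + @?g y) _ => apply (continuity_pt_plus f g)
  | |- continuity_pt (fun y => @?f y - @?g y) _ => apply (continuity_pt_minus f g)
  | |- continuity_pt (fun y => @?f y * @?g y) _ => apply (continuity_pt_mult f g)
  | |- continuity_pt (fun y => - @?f y) _ => apply (continuity_pt_opp f)
  | |- continuity_pt (fun y => exp (@?f y)) _ =>
      apply (continuity_pt_comp f exp); [|apply derivable_continuous_pt, derivable_pt_exp]
  | |- continuity_pt (fun y => cos (@?f y)) _ =>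
      apply (continuity_pt_comp f cos); [|apply derivable_continuous_pt, derivable_pt_cos]
  | |- continuity_pt (fun y => sin (@?f y)) _ =>
      apply (continuity_pt_comp f sin); [|apply derivable_continuous_pt, derivable_pt_sin]
  | |- continuity_pt (fun y => Rroot ?p (@?f y)) _ =>
      apply (continuity_pt_comp f (Rroot p)); [|apply continuity_pt_Rroot; assumption]
  | |- continuity_pt (Rroot _) _ => apply continuity_pt_Rroot; assumption
  end.

Lemma ex_RInt_continuity_pt (g : R -> R) a b :
  (forall x, continuity_pt g x) -> ex_RInt g a b.
Proof.
  intros Hg; apply (ex_RInt_continuous (V := R_CompleteNormedModule)).
  intros; apply continuity_pt_filterlim, Hg.
Qed.

Lemma is_derive_RInt_upper (g : R -> R) V :
  (forall x, continuity_pt g x) -> is_derive (fun V => RInt g 0 V) V (g V).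
Proof.
  intros Hg; apply (is_derive_RInt (V := R_CompleteNormedModule) _ _ 0).
  - apply filter_forall; intros.
    apply (RInt_correct (V := R_CompleteNormedModule)), ex_RInt_continuity_pt, Hg.
  - apply continuity_pt_filterlim, Hg.
Qed.

Lemma RInt_0_minus (g : R -> R) v w :
  (forall x, continuity_pt g x) -> RInt g 0 w - RInt g 0 v = RInt g v w.
Proof.
  intros Hg; rewrite <- (RInt_Chasles g 0 v w) by apply ex_RInt_continuity_pt, Hg.
  unfold plus; simpl; ring.
Qed.

Lemma RInt_0_le (g : R -> R) v w :
  (forall x, continuity_pt g x) -> (forall x, 0 <= g x) -> v <= w ->
  RInt g 0 v <= RInt g 0 w.
Proof.
  intros Hc Hg Hvw; assert (Hvw0 : 0 <= RInt g v w).
  { apply RInt_ge_0; [exact Hvw|apply ex_RInt_continuity_pt, Hc|intros; apply Hg]. }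
  rewrite <- RInt_0_minus in Hvw0 by exact Hc; lra.
Qed.

Lemma RInt_0_scal c (g : R -> R) W :
  (forall x, continuity_pt g x) -> RInt (fun w => c * g w) 0 W = c * RInt g 0 W.
Proof.
  intros Hg; apply (RInt_scal (V := R_CompleteNormedModule) g), ex_RInt_continuity_pt, Hg.
Qed.

Lemma RInt_0_comb (f g h : R -> R) c1 c2 W :
  (forall x, continuity_pt f x) -> (forall x, continuity_pt g x) -> (forall x, continuity_pt h x) ->
  RInt (fun w => f w - (c1 * g w + c2 * h w)) 0 W = RInt f 0 W - (c1 * RInt g 0 W + c2 * RInt h 0 W).
Proof.
  intros Hf Hg Hh; apply is_RInt_unique.
  apply (is_RInt_ext (V := R_NormedModule)
           (fun w => minus (f w) (plus (scal c1 (g w)) (scal c2 (h w)))));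
    [intros; unfold minus, plus, scal, opp; simpl; unfold mult; simpl; ring|].
  apply (is_RInt_minus (V := R_NormedModule));
    [|apply (is_RInt_plus (V := R_NormedModule)); apply (is_RInt_scal (V := R_NormedModule))];
    apply (RInt_correct (V := R_CompleteNormedModule)), ex_RInt_continuity_pt; assumption.
Qed.

Lemma is_lim_p_infty_incr_bounded (F : R -> R) a B :
  (forall v w, a <= v <= w -> F v <= F w) -> (forall w, a <= w -> F w <= B) ->
  exists L : R, is_lim F p_infty L.
Proof.
  intros Hincr Hbnd.
  destruct (completeness (fun y => exists w, a <= w /\ y = F w)) as [L [Hub Hlub]].
  - exists B; intros y [w [Hw ->]]; apply Hbnd, Hw.
  - exists (F a), a; split; [lra|reflexivity].
  - exists L; apply is_lim_spec; intros eps.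
    destruct (classic (exists w, a <= w /\ L - eps < F w)) as [[w [Hw HFw]]|Hnone].
    + exists w; intros v Hv.
      assert (F w <= F v) by (apply Hincr; lra).
      assert (F v <= L) by (apply Hub; exists v; split; [lra|reflexivity]).
      apply Rabs_def1; destruct eps; simpl in *; lra.
    + exfalso; assert (L <= L - eps); [|destruct eps; simpl in *; lra].
      apply Hlub; intros y [w [Hw ->]]; apply Rnot_lt_le.
      intros Hlt; apply Hnone; exists w; split; assumption.
Qed.

Lemma is_lim_p_infty_incr_ge (F : R -> R) a (L : R) w :
  (forall v w, a <= v <= w -> F v <= F w) -> is_lim F p_infty L -> a <= w -> F w <= L.
Proof.
  intros Hincr HL Hw.
  apply (is_lim_le_loc (fun _ => F w) F p_infty (F w) L); [|apply is_lim_const|exact HL].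
  exists w; intros v Hv; apply Hincr; lra.
Qed.

Lemma is_lim_improper_int_inf h (F : R -> R) a L Fa :
  improper_int_inf h a L ->
  (forall u v (pr : Riemann_integrable h u v), a < u -> u <= v -> RiemannInt pr = F v - F u) ->
  (forall eps, 0 < eps -> exists d, 0 < d /\ forall u, a < u < a + d -> Rabs (F u - Fa) < eps) ->
  is_lim F p_infty (L + Fa).
Proof.
  intros [Hex Hlim] HF HFa; apply is_lim_spec; intros [eps Heps]; simpl.
  destruct (Hlim (eps / 2)) as [d [M [Hd HM]]]; [lra|].
  destruct (HFa (eps / 2)) as [d' [Hd' HFu]]; [lra|].
  set (u := a + Rmin d d' / 2).
  assert (Hu : a < u /\ u < a + d /\ u < a + d').
  { assert (0 < Rmin d d') by (apply Rmin_pos; lra).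
    generalize (Rmin_l d d') (Rmin_r d d'); unfold u; lra. }
  destruct Hu as [Hau [Hud Hud']].
  exists (Rmax M u); intros v Hv.
  generalize (Rmax_l M u) (Rmax_r M u); intros HMv Huv.
  destruct (Hex u v) as [pr]; [lra|lra|].
  specialize (HM u v pr Hau Hud ltac:(lra) ltac:(lra)).
  specialize (HFu u ltac:(lra)).
  rewrite HF in HM by lra.
  apply Rabs_def2 in HM; apply Rabs_def2 in HFu; apply Rabs_def1; lra.
Qed.

Lemma improper_int_antiderivative h (F : R -> R) a b L Fa Fb :
  improper_int h a b L ->
  (forall u v (pr : Riemann_integrable h u v),
     a < u -> u <= v -> v < b -> RiemannInt pr = F v - F u) ->
  (forall eps, 0 < eps -> exists d, 0 < d /\ forall u, a < u < a + d -> Rabs (F u - Fa) < eps) ->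
  (forall eps, 0 < eps -> exists d, 0 < d /\ forall v, b - d < v < b -> Rabs (F v - Fb) < eps) ->
  L = Fb - Fa.
Proof.
  intros [Hab [Hex Hlim]] HF HFa HFb; apply cond_eq; intros eps Heps.
  destruct (Hlim (eps / 3)) as [d [Hd HL]]; [lra|].
  destruct (HFa (eps / 3)) as [da [Hda HFu]]; [lra|].
  destruct (HFb (eps / 3)) as [db [Hdb HFv]]; [lra|].
  set (m := Rmin (Rmin d (b - a)) (Rmin da db)).
  assert (Hm : 0 < m) by (unfold m; repeat apply Rmin_pos; lra).
  generalize (Rmin_l (Rmin d (b - a)) (Rmin da db)) (Rmin_r (Rmin d (b - a)) (Rmin da db))
    (Rmin_l d (b - a)) (Rmin_r d (b - a)) (Rmin_l da db) (Rmin_r da db); fold m; intros.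
  set (u := a + m / 2); set (v := b - m / 2).
  assert (Hu : a < u < a + m) by (unfold u; lra).
  assert (Hv : b - m < v < b) by (unfold v; lra).
  assert (Huv : u <= v) by (unfold u, v; lra).
  destruct (Hex u v) as [pr]; try lra.
  specialize (HL u v pr); rewrite HF in HL by lra.
  specialize (HL ltac:(lra) ltac:(lra) ltac:(lra) ltac:(lra) Huv).
  specialize (HFu u ltac:(lra)); specialize (HFv v ltac:(lra)).
  apply Rabs_def2 in HL; apply Rabs_def2 in HFu; apply Rabs_def2 in HFv; apply Rabs_def1; lra.
Qed.

(* [int_0^W g] is the difference of the nondecreasing bounded functions
   [int_0^W (h + g)] and [int_0^W h]. *)
Lemma is_lim_RInt_0_dominated (g h : R -> R) B :
  (forall x, continuity_pt g x) -> (forall x, continuity_pt h x) ->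
  (forall w, Rabs (g w) <= h w) -> (forall W, 0 <= W -> RInt h 0 W <= B) ->
  exists L : R, is_lim (fun W => RInt g 0 W) p_infty L.
Proof.
  intros Hg Hh Hgh HB.
  assert (Hhg : forall x, continuity_pt (fun w => h w + g w) x)
    by (intros; apply (continuity_pt_plus h g); auto).
  assert (Hbnd : forall w, - h w <= g w <= h w)
    by (intros w; generalize (Rle_abs (g w)) (Rle_abs (- g w)) (Hgh w); rewrite Rabs_Ropp; lra).
  destruct (is_lim_p_infty_incr_bounded (fun W => RInt (fun w => h w + g w) 0 W) 0 (2 * B))
    as [L1 HL1].
  - intros v w [_ Hvw]; apply RInt_0_le; [exact Hhg|intros x; generalize (Hbnd x); lra|exact Hvw].
  - intros w Hw; apply Rle_trans with (RInt (fun w => 2 * h w) 0 w).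
    + apply RInt_le; [exact Hw|apply ex_RInt_continuity_pt, Hhg|
        apply ex_RInt_continuity_pt; intros; solve_continuity; apply Hh|].
      intros x _; generalize (Hbnd x); lra.
    + rewrite RInt_0_scal by exact Hh; generalize (HB w Hw); lra.
  - destruct (is_lim_p_infty_incr_bounded (fun W => RInt h 0 W) 0 B) as [L2 HL2].
    + intros v w [_ Hvw]; apply RInt_0_le; [exact Hh|intros x; generalize (Hbnd x); lra|exact Hvw].
    + exact HB.
    + exists (L1 - L2); refine (is_lim_ext _ _ _ _ _ (is_lim_minus' _ _ _ _ _ HL1 HL2)).
      intros W; rewrite (RInt_plus (V := R_CompleteNormedModule) h g)
        by (apply ex_RInt_continuity_pt; assumption).
      unfold plus; simpl; ring.
Qed.

(* The substitution [w = t^p] turns this into [p int_0^(V^(1/p)) t^(p-1) exp (- be t) dt],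
   an incomplete Gamma integral. *)
Definition exp_root_int (p be V : R) : R := RInt (fun w => exp (- (be * Rroot p w))) 0 V.

Section ExpRootInt.
Variables p be : R.
Hypothesis hp : 0 < p.

Lemma continuity_pt_exp_Rroot x : continuity_pt (fun w => exp (- (be * Rroot p w))) x.
Proof. solve_continuity. Qed.

Lemma is_derive_exp_root_int V :
  is_derive (exp_root_int p be) V (exp (- (be * Rroot p V))).
Proof.
  apply (is_derive_RInt_upper (fun w => exp (- (be * Rroot p w)))), continuity_pt_exp_Rroot.
Qed.

Lemma exp_root_int_0 : exp_root_int p be 0 = 0.
Proof. apply (RInt_point (V := R_CompleteNormedModule)). Qed.

Lemma exp_root_int_lt v w : v < w -> exp_root_int p be v < exp_root_int p be w.
Proof.
  intros hvw; apply Rlt_0_minus; unfold exp_root_int.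
  rewrite RInt_0_minus by exact continuity_pt_exp_Rroot.
  apply RInt_gt_0; [exact hvw|intros; apply exp_pos|].
  intros; apply continuity_pt_filterlim, continuity_pt_exp_Rroot.
Qed.

Lemma exp_root_int_le v w : v <= w -> exp_root_int p be v <= exp_root_int p be w.
Proof. intros [H|<-]; [left; apply exp_root_int_lt, H|lra]. Qed.

Lemma exp_root_int_ge0 W : 0 <= W -> 0 <= exp_root_int p be W.
Proof. intros HW; rewrite <- exp_root_int_0; apply exp_root_int_le, HW. Qed.

Lemma exp_root_int_le_id W : 0 <= be -> 0 <= W -> exp_root_int p be W <= W.
Proof.
  intros hbe hW; unfold exp_root_int.
  replace W with (RInt (fun _ => 1) 0 W) at 2
    by (rewrite RInt_const; unfold scal; simpl; unfold mult; simpl; ring).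
  apply RInt_le; [exact hW|apply ex_RInt_continuity_pt, continuity_pt_exp_Rroot|
    apply ex_RInt_continuity_pt; intros; solve_continuity|].
  intros x _; rewrite <- exp_0; apply exp_le.
  assert (0 <= be * Rroot p x) by (apply Rmult_le_pos; [exact hbe|apply Rroot_ge0]); lra.
Qed.

Lemma exp_root_int_Rpower_small u eps : 0 <= be -> 0 < u -> 0 < eps ->
  u <= Rroot p eps -> exp_root_int p be (Rpower u p) <= eps.
Proof.
  intros hbe hu heps hue; eapply Rle_trans;
    [apply exp_root_int_le_id; [exact hbe|left; apply Rpower_pos]|].
  rewrite <- (Rpower_Rroot p hp eps) by exact heps; apply Rle_Rpower_l; lra.
Qed.

Lemma RiemannInt_Rpower_exp h u v (pr : Riemann_integrable h u v) : 0 < u -> u <= v ->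
  (forall t, 0 < t -> h t = Rpower t (p - 1) * exp (- (be * t))) ->
  RiemannInt pr = (exp_root_int p be (Rpower v p) - exp_root_int p be (Rpower u p)) / p.
Proof.
  intros hu huv hh; rewrite <- RInt_Reals.
  rewrite (RInt_ext h (fun t => Rpower t (p - 1) * exp (- (be * t)))).
  2:{ intros x Hx; rewrite Rmin_left, Rmax_right in Hx by lra; apply hh; lra. }
  apply is_RInt_unique.
  set (F := fun t => / p * exp_root_int p be (Rpower t p)).
  replace ((exp_root_int p be (Rpower v p) - exp_root_int p be (Rpower u p)) / p)
    with (minus (F v) (F u)) by (unfold F, minus, plus, opp; simpl; field; lra).
  apply (is_RInt_derive (V := R_CompleteNormedModule)); intros t Ht;
    rewrite Rmin_left, Rmax_right in Ht by lra.
  - replace (Rpower t (p - 1) * exp (- (be * t)))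
      with (/ p * ((p * Rpower t (p - 1)) * exp (- (be * Rroot p (Rpower t p)))))
      by (rewrite Rroot_Rpower by lra; field; lra).
    apply is_derive_scal, (is_derive_comp (exp_root_int p be) (fun t => Rpower t p)).
    + apply is_derive_exp_root_int.
    + apply is_derive_Reals, derivable_pt_lim_power; lra.
  - apply continuity_pt_filterlim, (continuity_pt_mult (fun t => Rpower t (p - 1))).
    + apply derivable_continuous_pt; exists ((p - 1) * Rpower t (p - 1 - 1)).
      apply derivable_pt_lim_power; lra.
    + solve_continuity.
Qed.

Lemma continuity_pt_exp_root_int_Rpower t : 0 < t ->
  continuity_pt (fun w => exp_root_int p be (Rpower w p)) t.
Proof.
  intros ht; apply derivable_continuous_pt.
  exists (p * Rpower t (p - 1) * exp (- (be * Rroot p (Rpower t p)))).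
  apply is_derive_Reals, (is_derive_comp (exp_root_int p be) (fun t => Rpower t p)).
  - apply is_derive_exp_root_int.
  - apply is_derive_Reals, derivable_pt_lim_power, ht.
Qed.

End ExpRootInt.

Lemma exp_root_int_scal p be V : 0 < p -> 0 < be ->
  exp_root_int p be V = / Rpower be p * exp_root_int p 1 (Rpower be p * V).
Proof.
  intros hp hbe; unfold exp_root_int.
  assert (Hc : 0 < Rpower be p) by apply Rpower_pos.
  rewrite <- (Rmult_0_r (Rpower be p)) at 2.
  rewrite <- (Rplus_0_r (Rpower be p * 0)), <- (Rplus_0_r (Rpower be p * V)).
  rewrite <- (RInt_comp_lin (V := R_CompleteNormedModule) _ _ _ 0 V)
    by apply ex_RInt_continuity_pt, continuity_pt_exp_Rroot, hp.
  rewrite <- RInt_0_scal; simpl.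
  - apply RInt_ext; intros x _; rewrite Rplus_0_r, Rroot_scal by assumption.
    rewrite <- Rmult_assoc, Rinv_l, !Rmult_1_l by lra; reflexivity.
  - intros; unfold scal; simpl; unfold mult; simpl; solve_continuity.
Qed.

Section GammaIntegral.
Variable p : R.
Hypothesis hp : 0 < p.

Lemma exp_root_int_Rpower_near_0 be eps : 0 <= be -> 0 < eps ->
  exists d, 0 < d /\ forall u, 0 < u < 0 + d -> Rabs (exp_root_int p be (Rpower u p) / p - 0) < eps.
Proof.
  intros hbe heps; exists (Rroot p (p * eps / 2)); split; [apply Rroot_gt0; nra|].
  intros u [hu hud]; rewrite Rminus_0_r, Rabs_pos_eq.
  - apply (Rmult_lt_reg_l p); [exact hp|]; unfold Rdiv; rewrite <- Rmult_assoc, (Rmult_comm p),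
      Rmult_assoc, Rinv_r, Rmult_1_r by lra.
    apply Rle_lt_trans with (p * eps / 2); [|nra].
    apply exp_root_int_Rpower_small; [exact hp|exact hbe|exact hu|nra|lra].
  - apply Rdiv_le_0_compat; [apply exp_root_int_ge0; [exact hp|left; apply Rpower_pos]|exact hp].
Qed.

Lemma is_lim_exp_root_int_Gamma G : IsGamma p G ->
  is_lim (fun t => exp_root_int p 1 (Rpower t p) / p) p_infty G.
Proof.
  intros hG; rewrite <- (Rplus_0_r G).
  apply (is_lim_improper_int_inf _ _ 0 G 0 hG).
  - intros u v pr hu huv; rewrite (RiemannInt_Rpower_exp p 1 hp _ u v pr hu huv).
    + unfold Rdiv; ring.
    + intros t _; rewrite Rmult_1_l; reflexivity.
  - intros eps; apply exp_root_int_Rpower_near_0; lra.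
Qed.

Lemma exp_root_int_lt_Gamma G V : IsGamma p G -> exp_root_int p 1 V < p * G.
Proof.
  intros hG; set (V' := Rmax V 0 + 1); set (t := Rroot p V').
  assert (hV' : V < V' /\ 0 < V') by (generalize (Rmax_l V 0) (Rmax_r V 0); unfold V'; lra).
  assert (ht : 0 < t) by (apply Rroot_gt0; lra).
  apply Rlt_le_trans with (exp_root_int p 1 (Rpower t p)).
  - unfold t; rewrite Rpower_Rroot by lra; apply exp_root_int_lt; lra.
  - apply (Rmult_le_reg_r (/ p)); [apply Rinv_0_lt_compat, hp|].
    replace (p * G * / p) with G by (field; lra).
    apply (is_lim_p_infty_incr_ge (fun t => exp_root_int p 1 (Rpower t p) / p) t);
      [|exact (is_lim_exp_root_int_Gamma G hG)|lra].
    intros v w Hvw; apply Rmult_le_compat_r; [left; apply Rinv_0_lt_compat, hp|].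
    apply exp_root_int_le, Rle_Rpower_l; lra.
Qed.

Lemma Gamma_pos G : IsGamma p G -> 0 < G.
Proof.
  intros hG; generalize (exp_root_int_lt_Gamma G 0 hG); rewrite exp_root_int_0.
  intros H; apply (Rmult_lt_reg_l p); lra.
Qed.

Lemma exp_root_int_lt_scaled_Gamma G be V : 0 < be -> IsGamma p G ->
  exp_root_int p be V < p * G / Rpower be p.
Proof.
  intros hbe hG; rewrite exp_root_int_scal by assumption; unfold Rdiv.
  rewrite (Rmult_comm (/ Rpower be p)); apply Rmult_lt_compat_r.
  - apply Rinv_0_lt_compat, Rpower_pos.
  - apply exp_root_int_lt_Gamma, hG.
Qed.

Lemma D_rel_pos b G t y : 0 < b -> 0 < t -> D_rel p b G t y ->
  y = Rpower (2 * b + 1) p / (Rpower 2 p * G) * (exp_root_int p (b + / 2) (Rpower t p) / p).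
Proof.
  intros hb ht [[Ht _]|[_ [L [HL ->]]]]; [lra|]; f_equal.
  rewrite <- (Rminus_0_r (_ / p)).
  apply (improper_int_antiderivative _ (fun t => exp_root_int p (b + / 2) (Rpower t p) / p)
           0 t L 0 _ HL).
  - intros u v pr hu huv _; rewrite (RiemannInt_Rpower_exp p (b + / 2) hp _ u v pr hu huv).
    + unfold Rdiv; ring.
    + intros s _; rewrite Ropp_mult_distr_l; reflexivity.
  - intros eps heps; apply exp_root_int_Rpower_near_0; lra.
  - intros eps heps.
    destruct (continuity_pt_eps _ t (continuity_pt_exp_root_int_Rpower p (b + / 2) hp t ht)
      (p * eps)) as [d [hd Hd]]; [nra|].
    exists d; split; [exact hd|]; intros v hv.
    set (A := exp_root_int p (b + / 2) (Rpower v p)) in *.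
    set (B := exp_root_int p (b + / 2) (Rpower t p)) in *.
    replace (A / p - B / p) with (/ p * (A - B)) by (field; lra).
    rewrite Rabs_mult, Rabs_pos_eq by (left; apply Rinv_0_lt_compat, hp).
    apply (Rmult_lt_reg_l p); [exact hp|].
    rewrite <- Rmult_assoc, Rinv_r, Rmult_1_l by lra.
    apply Hd; rewrite Rabs_left; lra.
Qed.

Lemma D_rel_0 b G y : D_rel p b G 0 y -> y = 0.
Proof. intros [[_ E]|[H _]]; [exact E|lra]. Qed.

(* Raise [c R < exp (c R)], [c = b / (p + 1)], to the power [p + 1]. *)
Lemma Rpower_mul_exp_lt b R : 0 < b -> 0 < R ->
  Rpower R p * exp (- (b * R)) < / (Rpower (b / (p + 1)) (p + 1) * R).
Proof.
  intros hb hR; set (c := b / (p + 1)).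
  assert (hc : 0 < c) by (unfold c; apply Rdiv_lt_0_compat; lra).
  assert (HcR : c * R < exp (c * R)) by (generalize (exp_ineq1 (c * R)); nra).
  assert (Hexp : Rpower c (p + 1) * (Rpower R p * R) < exp (b * R)).
  { replace (exp (b * R)) with (Rpower (exp (c * R)) (p + 1))
      by (unfold Rpower; rewrite ln_exp; f_equal; unfold c; field; lra).
    replace (Rpower c (p + 1) * (Rpower R p * R)) with (Rpower (c * R) (p + 1))
      by (rewrite <- Rpower_mult_distr, !Rpower_plus, !Rpower_1 by lra; ring).
    apply Rlt_Rpower_l; [lra|split; [nra|exact HcR]]. }
  assert (0 < Rpower c (p + 1)) by apply Rpower_pos.
  assert (0 < Rpower R p) by apply Rpower_pos.
  assert (0 < exp (b * R)) by apply exp_pos.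
  rewrite exp_Ropp; apply (Rmult_lt_reg_l (Rpower c (p + 1) * R)); [nra|].
  rewrite Rinv_r by nra; apply (Rmult_lt_reg_r (exp (b * R))); [assumption|].
  replace (Rpower c (p + 1) * R * (Rpower R p * / exp (b * R)) * exp (b * R))
    with (Rpower c (p + 1) * (Rpower R p * R)) by (field; lra).
  lra.
Qed.

Lemma is_lim_mul_exp_Rroot b : 0 < b -> is_lim (fun W => W * exp (- (b * Rroot p W))) p_infty 0.
Proof.
  intros hb; apply is_lim_spec; intros [eps heps]; simpl.
  set (k := Rpower (b / (p + 1)) (p + 1)).
  assert (hk : 0 < k) by apply Rpower_pos.
  exists (Rpower (/ (k * eps)) p); intros W HW.
  assert (hW : 0 < W) by (generalize (Rpower_pos (/ (k * eps)) p); lra).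
  assert (hR : / (k * eps) <= Rroot p W).
  { rewrite <- (Rroot_Rpower p hp (/ (k * eps))) by (apply Rinv_0_lt_compat; nra).
    apply Rroot_le; lra. }
  assert (hR0 : 0 < Rroot p W) by (apply Rroot_gt0; assumption).
  rewrite Rminus_0_r, Rabs_pos_eq by (left; apply Rmult_lt_0_compat; [exact hW|apply exp_pos]).
  rewrite <- (Rpower_Rroot p hp W) at 1 by exact hW.
  eapply Rlt_le_trans; [apply Rpower_mul_exp_lt; assumption|].
  fold k; rewrite <- (Rinv_inv eps); apply Rinv_le_contravar; [apply Rinv_0_lt_compat; lra|].
  apply (Rmult_le_reg_l (/ k)); [apply Rinv_0_lt_compat, hk|].
  rewrite <- Rmult_assoc, Rinv_l, Rmult_1_l by lra.
  rewrite <- Rinv_mult; exact hR.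
Qed.

End GammaIntegral.

Section InverseSubstitution.
Variables E dE tau : R -> R.
Hypothesis E_incr : forall v w, v < w -> E v < E w.
Hypothesis E_tau : forall s, 0 <= s < 1 -> E (tau s) = s.

Lemma E_lt_inv v w : E v < E w -> v < w.
Proof.
  intros H; apply Rnot_le_lt; intros [Hwv|<-]; [generalize (E_incr _ _ Hwv)|]; lra.
Qed.

Lemma E_le_inv v w : E v <= E w -> v <= w.
Proof. intros H; apply Rnot_lt_le; intros Hwv; generalize (E_incr _ _ Hwv); lra. Qed.

Lemma tau_E w : 0 <= E w < 1 -> tau (E w) = w.
Proof.
  intros Hw; generalize (E_tau _ Hw); intros H.
  apply Rle_antisym; apply E_le_inv; lra.
Qed.

Lemma tau_le u v : 0 <= u -> u <= v -> v < 1 -> tau u <= tau v.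
Proof. intros Hu Huv Hv; apply E_le_inv; rewrite !E_tau; lra. Qed.

Lemma continuity_pt_tau s : 0 < s < 1 -> continuity_pt tau s.
Proof.
  intros Hs eps Heps; set (t := tau s).
  assert (Et : E t = s) by (apply E_tau; lra).
  assert (El : E (t - eps) < s) by (rewrite <- Et; apply E_incr; lra).
  assert (Er : s < E (t + eps)) by (rewrite <- Et; apply E_incr; lra).
  set (d := Rmin (Rmin s (1 - s)) (Rmin (s - E (t - eps)) (E (t + eps) - s))).
  generalize (Rmin_l (Rmin s (1 - s)) (Rmin (s - E (t - eps)) (E (t + eps) - s)))
    (Rmin_r (Rmin s (1 - s)) (Rmin (s - E (t - eps)) (E (t + eps) - s)))
    (Rmin_l s (1 - s)) (Rmin_r s (1 - s))
    (Rmin_l (s - E (t - eps)) (E (t + eps) - s)) (Rmin_r (s - E (t - eps)) (E (t + eps) - s));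
    fold d; intros.
  exists d; split; [unfold d; repeat apply Rmin_pos; lra|].
  intros y [_ Hy]; simpl in *; unfold R_dist in *; apply Rabs_def2 in Hy.
  assert (Ey : E (tau y) = y) by (apply E_tau; lra).
  assert (t - eps < tau y) by (apply E_lt_inv; lra).
  assert (tau y < t + eps) by (apply E_lt_inv; lra).
  apply Rabs_def1; lra.
Qed.

Hypothesis E_deriv : forall w, is_derive E w (dE w).
Hypothesis dE_cont : forall w, continuity_pt dE w.

Lemma RInt_comp_tau (psi : R -> R) u v : (forall w, continuity_pt psi w) ->
  0 < u -> u <= v -> v < 1 ->
  RInt (fun y => psi (tau y)) u v = RInt (fun w => dE w * psi w) (tau u) (tau v).
Proof.
  intros Hpsi Hu Huv Hv.
  assert (Hrange : forall w, tau u <= w <= tau v -> u <= E w <= v).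
  { intros w [Hw1 Hw2]; rewrite <- (E_tau u), <- (E_tau v) by lra.
    split; [destruct Hw1 as [H|H]|destruct Hw2 as [H|H]];
      solve [left; apply E_incr, H | rewrite H; lra]. }
  rewrite <- (E_tau u) at 1 by lra; rewrite <- (E_tau v) at 1 by lra.
  assert (Htuv : tau u <= tau v) by (apply tau_le; lra).
  rewrite <- (RInt_comp (V := R_CompleteNormedModule) (fun y => psi (tau y)) E dE).
  - apply RInt_ext; intros x Hx; rewrite Rmin_left, Rmax_right in Hx by exact Htuv.
    rewrite tau_E; [reflexivity|generalize (Hrange x ltac:(lra)); lra].
  - intros w Hw; rewrite Rmin_left, Rmax_right in Hw by exact Htuv.
    apply continuity_pt_filterlim, (continuity_pt_comp tau psi); [|apply Hpsi].
    apply continuity_pt_tau; generalize (Hrange w Hw); lra.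
  - intros w _; split; [apply E_deriv|apply continuity_pt_filterlim, dE_cont].
Qed.

Lemma RInt_comp_tau_0 (g psi : R -> R) u v :
  (forall s, 0 < s < 1 -> g s = psi (tau s)) -> (forall w, continuity_pt psi w) ->
  0 < u -> u <= v -> v < 1 ->
  ex_RInt g u v /\ RInt g u v =
    RInt (fun w => dE w * psi w) 0 (tau v) - RInt (fun w => dE w * psi w) 0 (tau u).
Proof.
  intros Hg Hpsi Hu Huv Hv.
  assert (Hgtau : forall x, Rmin u v <= x <= Rmax u v -> psi (tau x) = g x)
    by (intros x Hx; rewrite Rmin_left, Rmax_right in Hx by lra; symmetry; apply Hg; lra).
  split.
  - apply (ex_RInt_ext (fun y => psi (tau y)));
      [intros x Hx; apply Hgtau; rewrite Rmin_left, Rmax_right in * by lra; lra|].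
    apply (ex_RInt_continuous (V := R_CompleteNormedModule)); intros x Hx.
    rewrite Rmin_left, Rmax_right in Hx by lra.
    apply continuity_pt_filterlim, (continuity_pt_comp tau psi); [|apply Hpsi].
    apply continuity_pt_tau; lra.
  - rewrite <- (RInt_ext (fun y => psi (tau y)) g)
      by (intros x Hx; apply Hgtau; rewrite Rmin_left, Rmax_right in * by lra; lra).
    rewrite RInt_comp_tau, RInt_0_minus
      by (assumption || (intros; apply (continuity_pt_mult dE psi); auto)).
    reflexivity.
Qed.

Hypothesis E_0 : E 0 = 0.
Hypothesis E_lt_1 : forall w, E w < 1.

Lemma improper_int_comp_tau (g psi : R -> R) (L : R) :
  (forall s, 0 < s < 1 -> g s = psi (tau s)) -> (forall w, continuity_pt psi w) ->
  is_lim (fun W => RInt (fun w => dE w * psi w) 0 W) p_infty L ->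
  improper_int g 0 1 L.
Proof.
  intros Hg Hpsi HL; set (F := fun W => RInt (fun w => dE w * psi w) 0 W).
  split; [lra|split].
  { intros u v Hu Huv Hv; constructor; apply ex_RInt_Reals_0, (RInt_comp_tau_0 g psi); assumption. }
  intros eps Heps.
  assert (HF0 : continuity_pt F 0).
  { apply derivable_continuous_pt; exists (dE 0 * psi 0); apply is_derive_Reals.
    apply (is_derive_RInt_upper (fun w => dE w * psi w)).
    intros; apply (continuity_pt_mult dE psi); auto. }
  destruct (continuity_pt_eps F 0 HF0 (eps / 2)) as [d0 [Hd0 HFd0]]; [lra|].
  apply is_lim_spec in HL; simpl in HL.
  destruct (HL (mkposreal (eps / 2) ltac:(lra))) as [M HM]; simpl in HM.
  set (W1 := Rmax M 0 + 1).
  assert (HW1 : M < W1 /\ 0 < W1) by (generalize (Rmax_l M 0) (Rmax_r M 0); unfold W1; lra).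
  assert (HE0 : 0 < E (d0 / 2)) by (rewrite <- E_0; apply E_incr; lra).
  assert (HE1 : 0 < 1 - E W1) by (generalize (E_lt_1 W1); lra).
  exists (Rmin (E (d0 / 2)) (1 - E W1)); split; [apply Rmin_pos; lra|].
  intros u v pr Hu Hud Hvd Hv Huv.
  generalize (Rmin_l (E (d0 / 2)) (1 - E W1)) (Rmin_r (E (d0 / 2)) (1 - E W1)); intros Hm1 Hm2.
  destruct (RInt_comp_tau_0 g psi u v Hg Hpsi Hu Huv Hv) as [_ HR]; rewrite <- RInt_Reals, HR.
  assert (Htu : 0 < tau u < d0 / 2) by (split; apply E_lt_inv; rewrite E_tau by lra; lra).
  assert (Htv : W1 < tau v) by (apply E_lt_inv; rewrite E_tau by lra; lra).
  specialize (HFd0 (tau u) ltac:(rewrite Rminus_0_r, Rabs_pos_eq; lra)).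
  specialize (HM (tau v) ltac:(lra)).
  unfold F in *; rewrite (RInt_point (V := R_CompleteNormedModule)) in HFd0.
  unfold zero in HFd0; simpl in HFd0.
  apply Rabs_def2 in HFd0; apply Rabs_def2 in HM; apply Rabs_def1; lra.
Qed.

End InverseSubstitution.

Lemma is_derive_mul_id_0 (k : R -> R) :
  continuity_pt k 0 -> is_derive (fun w => w * k w) 0 (k 0).
Proof.
  intros Hk; apply is_derive_Reals; intros eps Heps.
  destruct (Hk eps Heps) as [d [Hd Hkd]]; exists (mkposreal d Hd); intros h Hh Hhd; simpl in Hhd.
  replace (((0 + h) * k (0 + h) - 0 * k 0) / h - k 0) with (k h - k 0)
    by (rewrite Rplus_0_l; field; exact Hh).
  apply Hkd; split; [split; [exact I|congruence]|simpl; unfold R_dist; rewrite Rminus_0_r; exact Hhd].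
Qed.

Section FourierLaplace.
Variables p b : R.
Hypothesis hp : 0 < p.

(* Integration by parts against [w |-> w]: the identity [w (w^(1/p))' = w^(1/p) / p] makes
   the boundary term the only one left. *)
Lemma RInt_Rroot_by_parts (Phi dPhi : R -> R) W :
  (forall r, is_derive Phi r (dPhi r)) -> (forall r, continuity_pt dPhi r) ->
  RInt (fun w => Phi (Rroot p w) + Rroot p w / p * dPhi (Rroot p w)) 0 W = W * Phi (Rroot p W).
Proof.
  intros HPhi HdPhi.
  assert (HPhi_c : forall r, continuity_pt Phi r)
    by (intros r; apply derivable_continuous_pt; exists (dPhi r); apply is_derive_Reals, HPhi).
  assert (HPhi_r : forall w, continuity_pt (fun w => Phi (Rroot p w)) w)
    by (intros w; apply (continuity_pt_comp (Rroot p)); [apply continuity_pt_Rroot, hp|apply HPhi_c]).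
  set (dH := fun w => Phi (Rroot p w) + Rroot p w / p * dPhi (Rroot p w)).
  assert (HdH : forall w, is_derive (fun w => w * Phi (Rroot p w)) w (dH w)).
  { intros w; destruct (Rtotal_order w 0) as [Hw|[->|Hw]].
    - replace (dH w) with (1 * Phi 0)
        by (unfold dH; rewrite Rroot_nonpos by lra; unfold Rdiv; ring).
      apply (is_derive_ext_loc (fun w => w * Phi 0)).
      + apply (locally_interval _ w m_infty 0); [exact I|exact Hw|].
        intros y _ Hy; simpl in Hy; rewrite Rroot_nonpos by lra; reflexivity.
      + auto_derive; [exact I|ring].
    - replace (dH 0) with (Phi (Rroot p 0))
        by (unfold dH; rewrite Rroot_nonpos by lra; unfold Rdiv; ring).
      apply (is_derive_mul_id_0 (fun w => Phi (Rroot p w))), HPhi_r.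
    - replace (dH w) with (1 * Phi (Rroot p w) + w * ((Rroot p w / (p * w)) * dPhi (Rroot p w)))
        by (unfold dH; field; lra).
      apply (Derive.is_derive_mult (fun w => w) (fun w => Phi (Rroot p w)));
        [apply (is_derive_id (K := R_AbsRing))|].
      apply (is_derive_comp Phi (Rroot p)); [apply HPhi|apply is_derive_Rroot; assumption]. }
  assert (HI := is_RInt_derive (V := R_CompleteNormedModule) _ dH 0 W (fun w _ => HdH w)).
  rewrite (is_RInt_unique _ _ _ _ (HI ltac:(intros w _; apply continuity_pt_filterlim;
    apply (continuity_pt_plus (fun w => Phi (Rroot p w))); [apply HPhi_r|];
    apply (continuity_pt_mult (fun w => Rroot p w / p)); [unfold Rdiv; solve_continuity|];
    apply (continuity_pt_comp (Rroot p)); [apply continuity_pt_Rroot, hp|apply HdPhi]))).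
  unfold minus, plus, opp; simpl; ring.
Qed.

Lemma is_derive_RInt_Rroot_param (phi dphi : R -> R) W x :
  (forall y, is_derive phi y (dphi y)) -> (forall y, continuity_pt dphi y) ->
  is_derive (fun x => RInt (fun w => exp (- (b * Rroot p w)) * phi (x * Rroot p w)) 0 W) x
    (RInt (fun w => Rroot p w * exp (- (b * Rroot p w)) * dphi (x * Rroot p w)) 0 W).
Proof.
  intros Hphi Hdphi.
  set (f := fun u t => exp (- (b * Rroot p t)) * phi (u * Rroot p t)).
  assert (Hf : forall u t, is_derive (fun z => f z t) u
                 (Rroot p t * exp (- (b * Rroot p t)) * dphi (u * Rroot p t))).
  { intros u t; unfold f.
    replace (Rroot p t * exp (- (b * Rroot p t)) * dphi (u * Rroot p t))
      with (exp (- (b * Rroot p t)) * (Rroot p t * dphi (u * Rroot p t))) by ring.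
    apply is_derive_scal, (is_derive_comp phi (fun z => z * Rroot p t)); [apply Hphi|].
    auto_derive; [exact I|ring]. }
  rewrite (RInt_ext _ (fun t => Derive (fun u => f u t) x))
    by (intros t _; symmetry; apply is_derive_unique, Hf).
  apply (is_derive_RInt_param f 0 W x).
  - apply filter_forall; intros u t _; eexists; apply Hf.
  - intros t _.
    apply (continuity_2d_pt_ext
      (fun u v => Rroot p v * exp (- (b * Rroot p v)) * dphi (u * Rroot p v)));
      [intros; symmetry; apply is_derive_unique, Hf|].
    apply continuity_2d_pt_mult.
    + apply (continuity_1d_2d_pt_comp (fun v => Rroot p v * exp (- (b * Rroot p v))) (fun _ v => v));
        [solve_continuity|apply continuity_2d_pt_id2].
    + apply (continuity_1d_2d_pt_comp dphi (fun u v => u * Rroot p v)); [apply Hdphi|].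
      apply continuity_2d_pt_mult; [apply continuity_2d_pt_id1|].
      apply (continuity_1d_2d_pt_comp (Rroot p) (fun _ v => v));
        [apply continuity_pt_Rroot, hp|apply continuity_2d_pt_id2].
  - apply filter_forall; intros u; apply ex_RInt_continuity_pt; intros t; unfold f.
    apply (continuity_pt_mult (fun t => exp (- (b * Rroot p t)))); [solve_continuity|].
    apply (continuity_pt_comp (fun t => u * Rroot p t)); [solve_continuity|].
    apply derivable_continuous_pt; exists (dphi (u * Rroot p t)); apply is_derive_Reals, Hphi.
Qed.

End FourierLaplace.

Section FourierLaplaceIntegrals.
Variables p b G : R.
Hypothesis hp : 0 < p.
Hypothesis hb : 0 < b.
Hypothesis hG : IsGamma p G.

(* Real and imaginary parts of [int_0^W exp (- (b - i x) w^(1/p)) dw], and of the same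
   integral with an extra factor [w^(1/p)]. *)
Definition cos_int x W := RInt (fun w => exp (- (b * Rroot p w)) * cos (x * Rroot p w)) 0 W.
Definition sin_int x W := RInt (fun w => exp (- (b * Rroot p w)) * sin (x * Rroot p w)) 0 W.
Definition rcos_int x W :=
  RInt (fun w => Rroot p w * exp (- (b * Rroot p w)) * cos (x * Rroot p w)) 0 W.
Definition rsin_int x W :=
  RInt (fun w => Rroot p w * exp (- (b * Rroot p w)) * sin (x * Rroot p w)) 0 W.

Lemma cos_int_by_parts x W :
  W * (exp (- (b * Rroot p W)) * cos (x * Rroot p W)) =
  cos_int x W - (b / p * rcos_int x W + x / p * rsin_int x W).
Proof.
  rewrite <- (RInt_Rroot_by_parts p hp (fun r => exp (- (b * r)) * cos (x * r))
    (fun r => - b * exp (- (b * r)) * cos (x * r) - x * exp (- (b * r)) * sin (x * r))).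
  2:{ intros r; auto_derive; [exact I|ring]. }
  2:{ intros r; solve_continuity. }
  unfold cos_int, rcos_int, rsin_int; rewrite <- RInt_0_comb by (intros; solve_continuity).
  apply RInt_ext; intros; simpl; unfold Rdiv; ring.
Qed.

Lemma sin_int_by_parts x W :
  W * (exp (- (b * Rroot p W)) * sin (x * Rroot p W)) =
  sin_int x W - (b / p * rsin_int x W + - x / p * rcos_int x W).
Proof.
  rewrite <- (RInt_Rroot_by_parts p hp (fun r => exp (- (b * r)) * sin (x * r))
    (fun r => - b * exp (- (b * r)) * sin (x * r) + x * exp (- (b * r)) * cos (x * r))).
  2:{ intros r; auto_derive; [exact I|ring]. }
  2:{ intros r; solve_continuity. }
  unfold sin_int, rcos_int, rsin_int; rewrite <- RInt_0_comb by (intros; solve_continuity).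
  apply RInt_ext; intros; simpl; unfold Rdiv; ring.
Qed.

Lemma is_derive_cos_int W x : is_derive (fun x => cos_int x W) x (- rsin_int x W).
Proof.
  unfold rsin_int; rewrite <- (RInt_opp (V := R_CompleteNormedModule))
    by (apply ex_RInt_continuity_pt; intros; solve_continuity).
  rewrite (RInt_ext _ (fun w => Rroot p w * exp (- (b * Rroot p w)) * - sin (x * Rroot p w)))
    by (intros; unfold opp; simpl; ring).
  apply (is_derive_RInt_Rroot_param p b hp cos (fun y => - sin y));
    [intros y; apply is_derive_Reals, derivable_pt_lim_cos|intros; solve_continuity].
Qed.

Lemma is_derive_sin_int W x : is_derive (fun x => sin_int x W) x (rcos_int x W).
Proof.
  apply (is_derive_RInt_Rroot_param p b hp sin cos);
    [intros y; apply is_derive_Reals, derivable_pt_lim_sin|intros; apply continuity_cos].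
Qed.

Lemma Rabs_RInt_0_le_exp_root_int (g : R -> R) W : 0 <= W -> (forall x, continuity_pt g x) ->
  (forall w, Rabs (g w) <= exp (- (b * Rroot p w))) -> Rabs (RInt g 0 W) <= exp_root_int p b W.
Proof.
  intros hW Hg Hb; eapply Rle_trans; [apply abs_RInt_le; [exact hW|apply ex_RInt_continuity_pt, Hg]|].
  apply RInt_le; [exact hW| | |intros; apply Hb].
  - apply ex_RInt_continuity_pt; intros.
    apply (continuity_pt_comp g Rabs); [apply Hg|apply Rcontinuity_abs].
  - apply ex_RInt_continuity_pt, continuity_pt_exp_Rroot, hp.
Qed.

Definition Gamma_bound := p * G / Rpower b p.

Lemma Rabs_cos_int_le x W : 0 <= W -> Rabs (cos_int x W) <= Gamma_bound.
Proof.
  intros hW; left; eapply Rle_lt_trans; [|apply exp_root_int_lt_scaled_Gamma; assumption].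
  apply Rabs_RInt_0_le_exp_root_int; [exact hW|intros; solve_continuity|].
  intros; apply Rabs_mul_cos_le; left; apply exp_pos.
Qed.

Lemma Rabs_sin_int_le x W : 0 <= W -> Rabs (sin_int x W) <= Gamma_bound.
Proof.
  intros hW; left; eapply Rle_lt_trans; [|apply exp_root_int_lt_scaled_Gamma; assumption].
  apply Rabs_RInt_0_le_exp_root_int; [exact hW|intros; solve_continuity|].
  intros; apply Rabs_mul_sin_le; left; apply exp_pos.
Qed.

Lemma ex_lim_cos_int x : exists L : R, is_lim (cos_int x) p_infty L.
Proof.
  apply (is_lim_RInt_0_dominated _ (fun w => exp (- (b * Rroot p w))) Gamma_bound);
    [intros; solve_continuity|apply continuity_pt_exp_Rroot, hp| |].
  - intros; apply Rabs_mul_cos_le; left; apply exp_pos.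
  - intros W hW; left; apply exp_root_int_lt_scaled_Gamma; assumption.
Qed.

Lemma ex_lim_sin_int x : exists L : R, is_lim (sin_int x) p_infty L.
Proof.
  apply (is_lim_RInt_0_dominated _ (fun w => exp (- (b * Rroot p w))) Gamma_bound);
    [intros; solve_continuity|apply continuity_pt_exp_Rroot, hp| |].
  - intros; apply Rabs_mul_sin_le; left; apply exp_pos.
  - intros W hW; left; apply exp_root_int_lt_scaled_Gamma; assumption.
Qed.

End FourierLaplaceIntegrals.

Section Modulus.
Variables p b G : R.
Hypothesis hp : 0 < p.
Hypothesis hb : 0 < b.
Hypothesis hG : IsGamma p G.

Definition boundary_cos x W := W * (exp (- (b * Rroot p W)) * cos (x * Rroot p W)).
Definition boundary_sin x W := W * (exp (- (b * Rroot p W)) * sin (x * Rroot p W)).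

(* [|int_0^W exp (- (b - i x) w^(1/p)) dw|^2 (b^2 + x^2)^p]; its limit as [W -> +oo] is
   [(p Gamma(p))^2], independent of [x]. *)
Definition modulus_int x W := (cos_int p b x W ^ 2 + sin_int p b x W ^ 2) * Rpower (b * b + x * x) p.

Definition modulus_defect x W :=
  2 * p * (x * (sin_int p b x W * boundary_sin x W + cos_int p b x W * boundary_cos x W)
           + b * (cos_int p b x W * boundary_sin x W - sin_int p b x W * boundary_cos x W)).

Lemma is_derive_modulus_int W x : is_derive (fun x => modulus_int x W) x
  (Rpower (b * b + x * x) p / (b * b + x * x) * modulus_defect x W).
Proof.
  assert (HY : 0 < b * b + x * x) by nra.
  set (C := cos_int p b x W); set (S := sin_int p b x W).
  replace (Rpower (b * b + x * x) p / (b * b + x * x) * modulus_defect x W) with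
    ((INR 2 * (- rsin_int p b x W) * C ^ Init.Nat.pred 2
      + INR 2 * rcos_int p b x W * S ^ Init.Nat.pred 2)
       * Rpower (b * b + x * x) p
     + (C ^ 2 + S ^ 2) * ((2 * x) * (p * Rpower (b * b + x * x) (p - 1)))).
  - apply (Derive.is_derive_mult (fun x => cos_int p b x W ^ 2 + sin_int p b x W ^ 2)
      (fun x => Rpower (b * b + x * x) p)).
    + apply (is_derive_plus (fun x => cos_int p b x W ^ 2) (fun x => sin_int p b x W ^ 2));
        apply is_derive_pow; [apply is_derive_cos_int, hp|apply is_derive_sin_int, hp].
    + apply (is_derive_comp (fun y => Rpower y p) (fun x => b * b + x * x)).
      * apply is_derive_Reals, derivable_pt_lim_power, HY.
      * auto_derive; [exact I|ring].
  - unfold Rminus; rewrite Rpower_plus, Rpower_Ropp, Rpower_1 by exact HY.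
    unfold modulus_defect, boundary_cos, boundary_sin.
    rewrite (cos_int_by_parts p b hp x W), (sin_int_by_parts p b hp x W); fold C S.
    simpl; field; lra.
Qed.

Lemma Rabs_modulus_defect_le x W : 0 <= W ->
  Rabs (modulus_defect x W) <=
    2 * p * ((Rabs x + b) * (2 * Gamma_bound p b G * (W * exp (- (b * Rroot p W))))).
Proof.
  intros hW; set (B := Gamma_bound p b G); set (m := W * exp (- (b * Rroot p W))).
  assert (HC := Rabs_cos_int_le p b G hp hb hG x W hW); fold B in HC.
  assert (HS := Rabs_sin_int_le p b G hp hb hG x W hW); fold B in HS.
  assert (Hm : 0 <= exp (- (b * Rroot p W))) by (left; apply exp_pos).
  assert (Hc : Rabs (boundary_cos x W) <= m).
  { unfold boundary_cos, m; rewrite Rabs_mult, Rabs_pos_eq by exact hW.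
    apply Rmult_le_compat_l, Rabs_mul_cos_le; assumption. }
  assert (Hs : Rabs (boundary_sin x W) <= m).
  { unfold boundary_sin, m; rewrite Rabs_mult, Rabs_pos_eq by exact hW.
    apply Rmult_le_compat_l, Rabs_mul_sin_le; assumption. }
  unfold modulus_defect; set (C := cos_int p b x W) in *; set (S := sin_int p b x W) in *.
  set (bc := boundary_cos x W) in *; set (bs := boundary_sin x W) in *.
  assert (H1 := Rabs_mul_le _ _ _ _ HS Hs); assert (H2 := Rabs_mul_le _ _ _ _ HC Hc).
  assert (H3 := Rabs_mul_le _ _ _ _ HC Hs); assert (H4 := Rabs_mul_le _ _ _ _ HS Hc).
  assert (A1 : Rabs (S * bs + C * bc) <= 2 * (B * m))
    by (eapply Rle_trans; [apply Rabs_triang|lra]).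
  assert (A2 : Rabs (C * bs - S * bc) <= 2 * (B * m))
    by (eapply Rle_trans; [apply Rabs_triang|rewrite Rabs_Ropp; lra]).
  assert (A3 := Rabs_mul_le _ _ _ _ (Rle_refl (Rabs x)) A1).
  assert (A4 := Rabs_mul_le _ _ _ _ (Rle_refl (Rabs b)) A2); rewrite (Rabs_pos_eq b) in A4 by lra.
  rewrite Rabs_mult, (Rabs_pos_eq (2 * p)) by lra; apply Rmult_le_compat_l; [lra|].
  eapply Rle_trans; [apply Rabs_triang|lra].
Qed.

(* Mean value theorem in [x], with the defect bounded uniformly on [[-|X|, |X|]]. *)
Lemma modulus_int_variation X W : 0 <= W ->
  Rabs (modulus_int X W - modulus_int 0 W) <=
    Rpower (b * b + X * X) p / (b * b) * (2 * p * ((Rabs X + b) * (2 * Gamma_bound p b G)))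
    * Rabs X * (W * exp (- (b * Rroot p W))).
Proof.
  intros hW; set (m := W * exp (- (b * Rroot p W))).
  assert (Hm : 0 <= m) by (unfold m; apply Rmult_le_pos; [exact hW|left; apply exp_pos]).
  assert (HB : 0 <= Gamma_bound p b G)
    by (apply Rle_trans with (Rabs (cos_int p b 0 0));
        [apply Rabs_pos|apply Rabs_cos_int_le; auto; lra]).
  replace (_ * Rabs X * m) with
    (Rpower (b * b + X * X) p / (b * b) * (2 * p * ((Rabs X + b) * (2 * Gamma_bound p b G * m)))
     * Rabs (X - 0))
    by (rewrite Rminus_0_r; ring).
  apply (bounded_variation (fun x => modulus_int x W)
    (fun x => Rpower (b * b + x * x) p / (b * b + x * x) * modulus_defect x W)).
  intros t Ht; rewrite !Rminus_0_r in Ht; split; [apply is_derive_modulus_int|].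
  assert (Htt : t * t <= X * X)
    by (apply Rsqr_le_abs_1, Ht).
  assert (HYt : 0 < b * b + t * t) by nra.
  assert (HYp : 0 < Rpower (b * b + t * t) p / (b * b + t * t))
    by (apply Rdiv_lt_0_compat; [apply Rpower_pos|exact HYt]).
  rewrite Rabs_mult, (Rabs_pos_eq (_ / _)) by lra.
  apply Rmult_le_compat; [lra|apply Rabs_pos| |].
  - unfold Rdiv; apply Rmult_le_compat; [left; apply Rpower_pos|left; apply Rinv_0_lt_compat, HYt| |].
    + apply Rle_Rpower_l; lra.
    + apply Rinv_le_contravar; nra.
  - eapply Rle_trans; [apply Rabs_modulus_defect_le, hW|].
    apply Rmult_le_compat_l; [lra|apply Rmult_le_compat_r; [nra|lra]].
Qed.

Lemma is_lim_modulus_int x (C S : R) :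
  is_lim (cos_int p b x) p_infty C -> is_lim (sin_int p b x) p_infty S ->
  is_lim (fun W => modulus_int x W) p_infty ((C ^ 2 + S ^ 2) * Rpower (b * b + x * x) p).
Proof.
  intros HC HS.
  assert (HC2 := is_lim_mult _ _ _ _ _ HC HC I); assert (HS2 := is_lim_mult _ _ _ _ _ HS HS I).
  simpl in HC2, HS2.
  assert (H := is_lim_mult _ _ _ _ _ (is_lim_plus' _ _ _ _ _ HC2 HS2)
                 (is_lim_const (Rpower (b * b + x * x) p) p_infty) I); simpl in H.
  replace (C ^ 2 + S ^ 2) with (C * C + S * S) by ring.
  refine (is_lim_ext _ _ _ _ _ H); intros W; unfold modulus_int; ring.
Qed.

Lemma modulus_lim_invariant X (CX SX C0 S0 : R) :
  is_lim (cos_int p b X) p_infty CX -> is_lim (sin_int p b X) p_infty SX ->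
  is_lim (cos_int p b 0) p_infty C0 -> is_lim (sin_int p b 0) p_infty S0 ->
  (CX ^ 2 + SX ^ 2) * Rpower (b * b + X * X) p = (C0 ^ 2 + S0 ^ 2) * Rpower (b * b + 0 * 0) p.
Proof.
  intros HCX HSX HC0 HS0.
  set (K := Rpower (b * b + X * X) p / (b * b)
            * (2 * p * ((Rabs X + b) * (2 * Gamma_bound p b G))) * Rabs X).
  assert (Hdecay := is_lim_scal_l _ K _ _ (is_lim_mul_exp_Rroot p hp b hb)); simpl in Hdecay.
  assert (Hdiff : is_lim (fun W => modulus_int X W - modulus_int 0 W) p_infty 0).
  { apply (is_lim_le_le_loc (fun W => - (K * (W * exp (- (b * Rroot p W)))))
      (fun W => K * (W * exp (- (b * Rroot p W))))).
    - exists 0; intros W HW; generalize (modulus_int_variation X W ltac:(lra)); fold K.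
      intros Hv; apply Rabs_le_between in Hv; lra.
    - rewrite Rmult_0_r in Hdecay; replace (Finite 0) with (Rbar_opp 0) by (simpl; f_equal; ring).
      apply is_lim_opp, Hdecay.
    - rewrite Rmult_0_r in Hdecay; exact Hdecay. }
  assert (Hlim := is_lim_minus' _ _ _ _ _ (is_lim_modulus_int X CX SX HCX HSX)
                    (is_lim_modulus_int 0 C0 S0 HC0 HS0)).
  apply is_lim_unique in Hdiff; apply is_lim_unique in Hlim; rewrite Hlim in Hdiff.
  injection Hdiff; lra.
Qed.

End Modulus.

Lemma cos_int_0 p b W : cos_int p b 0 W = exp_root_int p b W.
Proof. apply RInt_ext; intros; rewrite Rmult_0_l, cos_0; apply Rmult_1_r. Qed.

Lemma is_lim_sin_int_0 p b : is_lim (sin_int p b 0) p_infty 0.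
Proof.
  refine (is_lim_ext _ _ _ _ _ (is_lim_const 0 p_infty)); intros W; unfold sin_int.
  rewrite (RInt_ext _ (fun _ => 0)) by (intros; rewrite Rmult_0_l, sin_0; apply Rmult_0_r).
  rewrite RInt_const; simpl; unfold scal; simpl; unfold mult; simpl; ring.
Qed.

Lemma cos_int_0_lim_pos p b (C0 : R) : 0 < p -> is_lim (cos_int p b 0) p_infty C0 -> 0 < C0.
Proof.
  intros hp HC0; apply Rlt_le_trans with (exp_root_int p b 1).
  - rewrite <- (exp_root_int_0 p b); apply exp_root_int_lt; lra.
  - rewrite <- cos_int_0; apply (is_lim_p_infty_incr_ge (cos_int p b 0) 0); [|exact HC0|lra].
    intros v w [_ Hvw]; rewrite !cos_int_0; apply exp_root_int_le; assumption.
Qed.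

Lemma modulus_lower_bound p b x C0 CX SX : 0 < p -> 1 <= b -> 0 <= C0 ->
  (CX ^ 2 + SX ^ 2) * Rpower (b * b + x * x) p = (C0 ^ 2 + 0 ^ 2) * Rpower (b * b + 0 * 0) p ->
  C0 * Rpower (1 + Rabs x) (- p) <= sqrt (CX ^ 2 + SX ^ 2).
Proof.
  intros hp hb hC0 HM.
  assert (HY : 0 < b * b + x * x) by nra.
  assert (HYp : 0 < Rpower (b * b + x * x) p) by apply Rpower_pos.
  assert (Hx : 0 <= Rabs x) by apply Rabs_pos.
  assert (Hxx : Rabs x * Rabs x = x * x) by (rewrite <- Rabs_mult; apply Rabs_pos_eq; nra).
  assert (HYb : b * b + x * x <= (b * (1 + Rabs x)) * (b * (1 + Rabs x))).
  { assert (0 <= (b * b - 1) * (x * x)) by (apply Rmult_le_pos; nra).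
    assert (0 <= b * b * Rabs x) by (apply Rmult_le_pos; nra).
    nra. }
  set (r := Rpower (1 + Rabs x) (- p)).
  assert (Hr : 0 < r) by apply Rpower_pos.
  assert (Hr2 : r * r * Rpower (b * b + x * x) p <= Rpower (b * b) p).
  { unfold r; rewrite Rpower_Ropp.
    assert (H1 : 0 < Rpower (1 + Rabs x) p) by apply Rpower_pos.
    apply (Rmult_le_reg_l (Rpower (1 + Rabs x) p * Rpower (1 + Rabs x) p)); [nra|].
    replace (Rpower (1 + Rabs x) p * Rpower (1 + Rabs x) p *
             (/ Rpower (1 + Rabs x) p * / Rpower (1 + Rabs x) p * Rpower (b * b + x * x) p))
      with (Rpower (b * b + x * x) p) by (field; lra).
    rewrite !Rpower_mult_distr by nra; apply Rle_Rpower_l; nra. }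
  rewrite <- (sqrt_square (C0 * r)) by nra; apply sqrt_le_1_alt.
  apply (Rmult_le_reg_r (Rpower (b * b + x * x) p)); [exact HYp|rewrite HM].
  replace (b * b + 0 * 0) with (b * b) by ring.
  replace (C0 * r * (C0 * r) * Rpower (b * b + x * x) p)
    with (C0 ^ 2 * (r * r * Rpower (b * b + x * x) p)) by ring.
  replace ((C0 ^ 2 + 0 ^ 2) * Rpower (b * b) p) with (C0 ^ 2 * Rpower (b * b) p) by ring.
  apply Rmult_le_compat_l; [nra|exact Hr2].
Qed.

Section Example.
Variables (p b G : R) (f : R -> R).
Hypothesis hp : 0 < p.
Hypothesis hb : 1 <= b.
Hypothesis hG : IsGamma p G.
Hypothesis hf_in : forall s, 0 <= s < 1 -> 1 <= f s /\ D_rel p b G (ln (f s)) s.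

Let be := b + / 2.
Let K := Rpower (2 * b + 1) p / (Rpower 2 p * G).

Lemma K_pos : 0 < K.
Proof.
  apply Rdiv_lt_0_compat; [apply Rpower_pos|].
  apply Rmult_lt_0_compat; [apply Rpower_pos|apply (Gamma_pos p hp G hG)].
Qed.

(* [D_root w = D(w^(1/p))]. *)
Let D_root w := K / p * exp_root_int p be w.

Lemma D_root_lt_1 w : D_root w < 1.
Proof.
  assert (hG0 := Gamma_pos p hp G hG).
  assert (HK : K = Rpower be p / G).
  { unfold K, be; replace (2 * b + 1) with ((b + / 2) * 2) by field.
    rewrite <- Rpower_mult_distr by lra; field; split; [lra|apply Rgt_not_eq, Rpower_pos]. }
  apply Rlt_le_trans with (K / p * (p * G / Rpower be p)).
  - apply Rmult_lt_compat_l; [apply Rdiv_lt_0_compat; [apply K_pos|exact hp]|].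
    apply exp_root_int_lt_scaled_Gamma; [exact hp|unfold be; lra|exact hG].
  - right; rewrite HK; field; repeat split; (lra || apply Rgt_not_eq, Rpower_pos).
Qed.

(* [(log f(s))^p], written out at [f(s) = 1] because [Rpower 0 p] is [1]. *)
Let log_f_pow s := if Rlt_dec 0 (ln (f s)) then Rpower (ln (f s)) p else 0.

Lemma f_spec s : 0 <= s < 1 -> D_root (log_f_pow s) = s /\ f s = exp (Rroot p (log_f_pow s)).
Proof.
  intros Hs; destruct (hf_in s Hs) as [Hf1 HD].
  assert (Hl : 0 <= ln (f s)) by (rewrite <- ln_1; apply ln_le; lra).
  unfold log_f_pow; destruct (Rlt_dec 0 (ln (f s))) as [Hpos|Hz].
  - rewrite Rroot_Rpower, exp_ln by lra; split; [|reflexivity].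
    symmetry; rewrite (D_rel_pos p hp b G (ln (f s)) s) at 1 by (assumption || lra).
    unfold D_root, K, be, Rdiv; ring.
  - assert (E : ln (f s) = 0) by lra; rewrite E in HD; apply D_rel_0 in HD.
    unfold D_root; rewrite exp_root_int_0, Rroot_nonpos by lra; split; [lra|].
    rewrite <- (exp_ln (f s)), E by lra; reflexivity.
Qed.

Lemma improper_int_f (g phi : R -> R) (L : R) : (forall r, continuity_pt phi r) ->
  (forall s, 0 < s < 1 -> g s = exp (/ 2 * Rroot p (log_f_pow s)) * phi (Rroot p (log_f_pow s))) ->
  is_lim (fun W => RInt (fun w => exp (- (b * Rroot p w)) * phi (Rroot p w)) 0 W) p_infty L ->
  improper_int g 0 1 (K / p * L).
Proof.
  intros Hphi Hg HL.
  assert (HKp : 0 < K / p) by (apply Rdiv_lt_0_compat; [apply K_pos|exact hp]).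
  apply (improper_int_comp_tau D_root (fun w => K / p * exp (- (be * Rroot p w))) log_f_pow)
    with (psi := fun w => exp (/ 2 * Rroot p w) * phi (Rroot p w)).
  - intros v w Hvw; apply Rmult_lt_compat_l, exp_root_int_lt; assumption.
  - intros s Hs; apply f_spec, Hs.
  - intros w; apply is_derive_scal, is_derive_exp_root_int, hp.
  - intros w; solve_continuity.
  - unfold D_root; rewrite exp_root_int_0; ring.
  - exact D_root_lt_1.
  - exact Hg.
  - intros w; apply (continuity_pt_mult (fun w => exp (/ 2 * Rroot p w))); [solve_continuity|].
    apply (continuity_pt_comp (Rroot p)); [apply continuity_pt_Rroot, hp|apply Hphi].
  - refine (is_lim_ext _ _ _ _ _ (is_lim_scal_l _ (K / p) _ _ HL)); intros W.
    rewrite <- RInt_0_scal.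
    + apply RInt_ext; intros w _; simpl; unfold be.
      replace (- ((b + / 2) * Rroot p w)) with (- (b * Rroot p w) + - (/ 2 * Rroot p w)) by ring.
      assert (E : exp (- (/ 2 * Rroot p w)) * exp (/ 2 * Rroot p w) = 1)
        by (rewrite <- exp_plus, <- exp_0; f_equal; ring).
      rewrite exp_plus, <- (Rmult_1_r (exp (- (b * Rroot p w)))) at 1; rewrite <- E; ring.
    + intros w; apply (continuity_pt_mult (fun w => exp (- (b * Rroot p w)))); [solve_continuity|].
      apply (continuity_pt_comp (Rroot p)); [apply continuity_pt_Rroot, hp|apply Hphi].
Qed.

Lemma Rpower_abs_f s a : 0 < s < 1 -> Rpower (Rabs (f s)) a = exp (a * Rroot p (log_f_pow s)).
Proof.
  intros Hs; destruct (f_spec s ltac:(lra)) as [_ Hf].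
  rewrite Hf, Rabs_pos_eq by (left; apply exp_pos); unfold Rpower; rewrite ln_exp; reflexivity.
Qed.

Lemma f_pos s : 0 < s < 1 -> 0 < f s.
Proof. intros Hs; destruct (f_spec s ltac:(lra)) as [_ ->]; apply exp_pos. Qed.

Lemma improper_int_supp (C0 : R) : is_lim (cos_int p b 0) p_infty C0 ->
  improper_int (fun s => Rpower (Rabs (f s)) (1 + (0 - 1) / 2)) 0 1 (K / p * C0).
Proof.
  intros HC0; apply (improper_int_f _ (fun r => cos (0 * r))); [intros; solve_continuity| |exact HC0].
  intros s Hs; rewrite Rpower_abs_f, Rmult_0_l, cos_0 by exact Hs; rewrite Rmult_1_r; f_equal; field.
Qed.

Lemma improper_int_m_re sg x (CX : R) : is_lim (cos_int p b x) p_infty CX ->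
  improper_int (m_integrand_re (fun y => y) 0 f sg x) 0 1 (K / p * CX).
Proof.
  intros HCX; apply (improper_int_f _ (fun r => cos (x * r))); [intros; solve_continuity| |exact HCX].
  intros s Hs; unfold m_integrand_re, Rsgn; rewrite Rpower_abs_f by exact Hs.
  assert (Hf := f_pos s Hs); destruct (f_spec s ltac:(lra)) as [_ Hfs].
  rewrite Rabs_pos_eq by lra; rewrite Hfs at 1; rewrite Hfs, ln_exp.
  destruct sg; [destruct (Rlt_dec 0 (exp (Rroot p (log_f_pow s)))) as [_|]; [|lra]|];
    rewrite Rmult_1_r, <- exp_plus; do 2 f_equal; field.
Qed.

Lemma improper_int_m_im sg x (SX : R) : is_lim (sin_int p b x) p_infty SX ->
  improper_int (m_integrand_im (fun y => y) 0 f sg x) 0 1 (K / p * - SX).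
Proof.
  intros HSX; apply (improper_int_f _ (fun r => - sin (x * r))); [intros; solve_continuity| |].
  - intros s Hs; unfold m_integrand_im, Rsgn; rewrite Rpower_abs_f by exact Hs.
    assert (Hf := f_pos s Hs); destruct (f_spec s ltac:(lra)) as [_ Hfs].
    rewrite Rabs_pos_eq by lra; rewrite Hfs at 1; rewrite Hfs, ln_exp.
    destruct sg; [destruct (Rlt_dec 0 (exp (Rroot p (log_f_pow s)))) as [_|]; [|lra]|];
      rewrite Rmult_1_r, <- Ropp_mult_distr_r, <- exp_plus; do 3 f_equal; field.
  - refine (is_lim_ext _ _ _ _ _ (is_lim_opp _ _ _ HSX)); intros W; simpl.
    unfold sin_int; rewrite <- (RInt_opp (V := R_CompleteNormedModule))
      by (apply ex_RInt_continuity_pt; intros; solve_continuity).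
    apply RInt_ext; intros; unfold opp; simpl; ring.
Qed.

End Example.

Theorem mainTheorem7 (p b G : R) (f : R -> R)
  (hp : 0 < p) (hb : 1 <= b) (hG : IsGamma p G)
  (hf_in : forall s, 0 <= s < 1 -> 1 <= f s /\ D_rel p b G (ln (f s)) s)
  (hf_out : forall s, ~ (0 <= s < 1) -> f s = 0) :
  (exists I, improper_int (fun s => Rpower (Rabs (f s)) (1 + (0 - 1) / 2)) 0 1 I) /\
  (exists gamma, 0 < gamma /\
     forall (sg : bool) (x : R), exists Re Im,
       improper_int (m_integrand_re (fun y => y) 0 f sg x) 0 1 Re /\
       improper_int (m_integrand_im (fun y => y) 0 f sg x) 0 1 Im /\
       gamma * Rpower (1 + Rabs x) (- p) <= sqrt (Re ^ 2 + Im ^ 2)).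
Proof.
  assert (hb0 : 0 < b) by lra.
  set (c := Rpower (2 * b + 1) p / (Rpower 2 p * G) / p).
  assert (hc : 0 < c) by (apply Rdiv_lt_0_compat; [apply (K_pos p b G)|]; assumption).
  destruct (ex_lim_cos_int p b G hp hb0 hG 0) as [C0 HC0].
  assert (hC0 := cos_int_0_lim_pos p b C0 hp HC0).
  split; [exists (c * C0); exact (improper_int_supp p b G f hp hb hG hf_in C0 HC0)|].
  exists (c * C0); split; [apply Rmult_lt_0_compat; assumption|intros sg x].
  destruct (ex_lim_cos_int p b G hp hb0 hG x) as [CX HCX].
  destruct (ex_lim_sin_int p b G hp hb0 hG x) as [SX HSX].
  exists (c * CX), (c * - SX); split; [|split].
  - exact (improper_int_m_re p b G f hp hb hG hf_in sg x CX HCX).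
  - exact (improper_int_m_im p b G f hp hb hG hf_in sg x SX HSX).
  - replace ((c * CX) ^ 2 + (c * - SX) ^ 2) with (c ^ 2 * (CX ^ 2 + SX ^ 2)) by ring.
    rewrite sqrt_mult_alt, sqrt_pow2, Rmult_assoc by nra.
    apply Rmult_le_compat_l; [lra|].
    apply (modulus_lower_bound p b); [exact hp|exact hb|lra|].
    exact (modulus_lim_invariant p b G hp hb0 hG x CX SX C0 0 HCX HSX HC0 (is_lim_sin_int_0 p b)).
Qed.
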